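(* Let $\mathcal T=(\mathbf i,E)$ be a forest with vertices $\mathbf i\subset[N]$, and let $F$ be any function of the adjacency matrix. For each edge $e=\{i_e,i'_e\}\in E$ associate indices $j_e,j'_e\in[N]$, and write $\mathbf j=\{j_e,j'_e\}_{e\in E}$. If all indices in $\mathbf i,\mathbf j$ are distinct, then $$\mathbb E\Big[F(A)\prod_{e\in E}\chi_{i_ei'_e}^{j_ej'_e}(A)\Big]=\mathbb E\Big[F\Big(A+\sum_{e\in E}\xi_{i_ei'_e}^{j_ej'_e}\Big)\prod_{e\in E}\chi_{i_ej_e}^{i'_ej'_e}(A)\Big].$$ Moreover, if $i\in\mathbf i$ and the indices of $\mathbf i$ together with $j,k,m,\ell$ are all distinct, then $$\mathbb E\big[A_{\mathcal T}\chi_{ik}^{m\ell}(A)F(A)\big]=\mathbb E\big[A_{\mathcal T}\chi_{im}^{k\ell}(A)F(A+\xi_{ik}^{m\ell})\big],\qquad \mathbb E\big[A_{\mathcal T}\chi_{jk}^{m\ell}(A)F(A)\big]=\mathbb E\big[A_{\mathcal T}\chi_{jm}^{k\ell}(A)F(A+\xi_{jk}^{m\ell})\big].$$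
   Context: $\mathbb E$ is expectation over $A$, the adjacency matrix of a uniformly random $d$-regular simple graph on $[N]=\{1,\dots,N\}$. $(\Delta_{ij})_{ab}=\delta_{ia}\delta_{jb}+\delta_{ib}\delta_{ja}$, $\xi_{ij}^{k\ell}=\Delta_{ij}+\Delta_{k\ell}-\Delta_{ik}-\Delta_{j\ell}$, and $\chi_{ij}^{k\ell}(A)=A_{ij}A_{k\ell}(1-A_{ik})(1-A_{j\ell})$. A forest $\mathcal T=(\mathbf i,E)$ is a finite simple graph whose vertex set $\mathbf i$ is a set of distinct elements of $[N]$ and which has no cycles (isolated vertices allowed); $A_{\mathcal T}=\prod_{\{a,b\}\in E}A_{ab}$ ($A_{\mathcal T}=1$ if $E=\emptyset$). $F$ may be evaluated at arbitrary real symmetric matrices. *)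

From HB Require Import structures.
From mathcomp Require Import all_boot all_order all_algebra.
From mathcomp Require Import reals.
Set Implicit Arguments. Unset Strict Implicit. Unset Printing Implicit Defensive.
Import Order.TTheory GRing.Theory Num.Theory.
Local Open Scope ring_scope.

Section Defs.
Variable R : realType.
Variable N : nat.

Definition graphN := {ffun 'I_N * 'I_N -> bool}.

Definition is_dreg (d : nat) (g : graphN) : bool :=
  [&& [forall i, ~~ g (i, i)],
      [forall i, forall j, g (i, j) == g (j, i)] &
      [forall i, #|[set j | g (i, j)]| == d]].

Definition adj (g : graphN) : 'M[R]_N := \matrix_(i, j) (g (i, j))%:R.

Definition Exp (d : nat) (F : 'M[R]_N -> R) : R :=
  (\sum_(g : graphN | is_dreg d g) F (adj g)) / (#|[set g : graphN | is_dreg d g]|)%:R.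

Definition Delta (i j : 'I_N) : 'M[R]_N :=
  \matrix_(a, b) (((i == a) && (j == b))%:R + ((i == b) && (j == a))%:R).

Definition xi (i j k l : 'I_N) : 'M[R]_N :=
  Delta i j + Delta k l - Delta i k - Delta j l.

Definition chi (i j k l : 'I_N) (A : 'M[R]_N) : R :=
  A i j * A k l * (1 - A i k) * (1 - A j l).

End Defs.

(* A forest T = (V, E) on distinct vertices V of [N], with the m edges
   listed (each with a chosen orientation) as e |-> {ie e, ie' e}. *)
Section Forest.
Variable N m : nat.
Variable V : {set 'I_N}.
Variables ie ie' : 'I_m -> 'I_N.

Definition forest_edge (x y : 'I_N) : bool :=
  [exists e, ((ie e == x) && (ie' e == y)) || ((ie e == y) && (ie' e == x))].

Definition is_forest : Prop :=
  (forall e, [/\ ie e \in V, ie' e \in V & ie e != ie' e]) /\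
  (* the edges are pairwise distinct (E is a set of unordered pairs) *)
  (forall e f, e != f ->
     ~ ((ie e == ie f) && (ie' e == ie' f) || (ie e == ie' f) && (ie' e == ie f))) /\
  (forall s : seq 'I_N, uniq s -> (3 <= size s)%N -> ~~ cycle forest_edge s).

End Forest.

Definition A_T (R : realType) (N m : nat) (ie ie' : 'I_m -> 'I_N) (A : 'M[R]_N) : R :=
  \prod_(e < m) A (ie e) (ie' e).

Arguments is_dreg {N} d g.
Arguments adj {R N} g.
Arguments Exp {R N} d F.
Arguments Delta {R N} i j.
Arguments xi {R N} i j k l.
Arguments chi {R N} i j k l A.
Arguments forest_edge {N m} ie ie' x y.
Arguments is_forest {N m} V ie ie'.
Arguments A_T {R N m} ie ie' A.

From HB Require Import structures.
From mathcomp Require Import all_boot all_order all_algebra.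
From mathcomp Require Import reals.
Import Order.TTheory GRing.Theory Num.Theory.
Local Open Scope ring_scope.
Set Implicit Arguments. Unset Strict Implicit. Unset Printing Implicit Defensive.

(* A switching of four distinct vertices (a, b, c, e) toggles the four pairs
   ab, ce, ac, be.  On graphs containing the edges ab, ce but not ac, be
   ("switchable" graphs) it is an involution onto the graphs switchable for
   (a, c, b, e); it preserves d-regularity, and the adjacency matrix changes by
   exactly -xi_ab^ce.  Reindexing the sum over d-regular graphs along this
   bijection gives the basic identity [switching_identity]:
     sum_g H(A) chi_ab^ce(A) = sum_g H(A + xi_ab^ce) chi_ac^be(A).
   If several switchings toggle pairwise disjoint sets of pairs, each one
   leaves the other indicators chi and matrices xi untouched, and induction
   on the list of switchings gives [multi_switching_identity].

   For the proposition, each edge {i, i'} of the forest inside V with its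
   labels j, j' outside V gives a switching; distinctness of the labels and
   of the edges makes these switchings disjoint.  For the second part a single
   switching with three vertices outside V never toggles a pair inside V,
   so the weight A_T is invariant. *)

Ltac simpl_neq :=
  repeat match goal with
  | H : (?x == ?y) = false |- context [?x == ?y] => rewrite H
  | H : (?x == ?y) = false |- context [?y == ?x] => rewrite (eq_sym y x) H
  end; rewrite ?eqxx /= ?andbF ?orbF ?andbT ?orbT.

Ltac neq_of_distinct4 D :=
  let D' := fresh in
  have D' := D; case/and5P: D' => /negbTE ? /negbTE ? /negbTE ? /negbTE ? /andP[/negbTE ? /negbTE ?].

Lemma card_exchange (T : finType) (f f' : T -> bool) (u w : T) :
  u != w -> f u -> ~~ f w -> ~~ f' u -> f' w ->
  (forall j, j != u -> j != w -> f' j = f j) ->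
  #|[set j | f' j]| = #|[set j | f j]|.
Proof.
move=> uw fu fw f'u f'w f'E.
rewrite (cardsD1 w [set j | f' j]) (cardsD1 u [set j | f j]) !inE f'w fu.
congr (_ + _)%N; apply: eq_card => j; rewrite !inE.
case: (eqVneq j w) => [->|jw]; first by rewrite eq_sym (negbTE uw) (negbTE fw).
case: (eqVneq j u) => [->|ju]; first by rewrite (negbTE f'u).
by rewrite /= f'E.
Qed.

Section Switching.
Variable N : nat.
Implicit Types (a b c e u v x y : 'I_N) (g h : graphN N).

Definition same_pair x y u v := ((u == x) && (v == y)) || ((u == y) && (v == x)).

Definition switch_pair a b c e x y :=
  [|| same_pair x y a b, same_pair x y c e, same_pair x y a c | same_pair x y b e].

Definition switch a b c e g : graphN N :=
  [ffun p => if switch_pair a b c e p.1 p.2 then ~~ g p else g p].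

(* The switching (a, b, c, e) applies to g: ab, ce are edges, ac, be are not;
   its indicator is chi_ab^ce of the adjacency matrix. *)
Definition switchable a b c e g := [&& g (a, b), g (c, e), ~~ g (a, c) & ~~ g (b, e)].

Definition distinct4 a b c e := [&& a != b, a != c, a != e, b != c, b != e & c != e].

Definition symmetric_graph g := forall x y, g (x, y) = g (y, x).

Lemma same_pairC x y u v : same_pair x y u v = same_pair y x u v.
Proof. by rewrite /same_pair orbC. Qed.

Lemma same_pair_diag x u v : u != v -> same_pair x x u v = false.
Proof.
move=> uv; apply/negbTE; apply: contra uv.
by case/orP=> /andP[/eqP -> /eqP ->].
Qed.

Lemma same_pair_trans x y u v u' v' :
  same_pair x y u v -> same_pair x y u' v' -> same_pair u v u' v'.
Proof. by case/orP=> /andP[/eqP <- /eqP <-] //; rewrite same_pairC. Qed.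

Lemma same_pair_edge g x y u v :
  symmetric_graph g -> same_pair x y u v -> g (x, y) = g (u, v).
Proof. by move=> S; case/orP=> /andP[/eqP <- /eqP <-]. Qed.

Lemma switch_pairC a b c e x y : switch_pair a b c e x y = switch_pair a b c e y x.
Proof. by rewrite /switch_pair !(same_pairC x y). Qed.

Lemma switch_pair_same a b c e x y u v :
  same_pair x y u v -> switch_pair a b c e x y = switch_pair a b c e u v.
Proof. by case/orP=> /andP[/eqP <- /eqP <-] //; rewrite switch_pairC. Qed.

Lemma switch_pair_swap a b c e : switch_pair a b c e =2 switch_pair a c b e.
Proof.
move=> x y; rewrite /switch_pair.
by case: (same_pair x y a b); case: (same_pair x y c e);
  case: (same_pair x y a c); case: (same_pair x y b e).
Qed.

Lemma switch_swap a b c e : switch a b c e =1 switch a c b e.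
Proof. by move=> g; apply/ffunP=> p; rewrite !ffunE switch_pair_swap. Qed.

Lemma switchK a b c e : involutive (switch a b c e).
Proof.
move=> g; apply/ffunP=> p; rewrite !ffunE.
by case: (switch_pair a b c e p.1 p.2); rewrite ?negbK.
Qed.

Lemma symmetric_dreg d g : is_dreg d g -> symmetric_graph g.
Proof. by case/and3P=> _ /forallP sym _ x y; apply/eqP; move/forallP: (sym x). Qed.



Ltac switch_simpl := rewrite ?ffunE /= /switch_pair /same_pair; simpl_neq.
Ltac exchange_at_endpoint :=
  try move=> j /negbTE ? /negbTE ?; switch_simpl; rewrite ?negbK.

(* At a switched vertex one neighbour is exchanged for a non-neighbour (at a:
   b for c, at b: a for e, ...); other vertices keep their neighbourhood. *)
Lemma switch_degree a b c e h v :
  distinct4 a b c e -> switchable a b c e h -> symmetric_graph h ->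
  #|[set j | switch a b c e h (v, j)]| = #|[set j | h (v, j)]|.
Proof.
move=> D /and4P[hab hce hac hbe] S; neq_of_distinct4 D.
have hba : h (b, a) by rewrite S.
have hec : h (e, c) by rewrite S.
have hca : ~~ h (c, a) by rewrite S.
have heb : ~~ h (e, b) by rewrite S.
case: (eqVneq v a) => [->|/negbTE va].
  by apply: (card_exchange (u:=b) (w:=c)); exchange_at_endpoint.
case: (eqVneq v b) => [->|/negbTE vb].
  by apply: (card_exchange (u:=a) (w:=e)); exchange_at_endpoint.
case: (eqVneq v c) => [->|/negbTE vc].
  by apply: (card_exchange (u:=e) (w:=a)); exchange_at_endpoint.
case: (eqVneq v e) => [->|/negbTE ve].
  by apply: (card_exchange (u:=c) (w:=b)); exchange_at_endpoint.
by apply: eq_card => j; rewrite !inE; switch_simpl.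
Qed.

Lemma dreg_switch d a b c e h :
  distinct4 a b c e -> switchable a b c e h -> is_dreg d h -> is_dreg d (switch a b c e h).
Proof.
move=> D P Dh; have S := symmetric_dreg Dh.
case/and3P: Dh => /forallP loopless _ /forallP deg; neq_of_distinct4 D.
apply/and3P; split.
- by apply/forallP=> x; rewrite ffunE /= /switch_pair !same_pair_diag ?loopless //; simpl_neq.
- by apply/forallP=> x; apply/forallP=> y; rewrite !ffunE /= switch_pairC S.
- by apply/forallP=> x; rewrite switch_degree //; exact: deg.
Qed.

Lemma switchable_switch a b c e h : distinct4 a b c e ->
  switchable a c b e (switch a b c e h) = switchable a b c e h.
Proof.
move=> D; neq_of_distinct4 D; rewrite /switchable; switch_simpl; rewrite !negbK.
by case: (h (a, b)); case: (h (c, e)); case: (h (a, c)); case: (h (b, e)).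
Qed.

Lemma distinct4_swap a b c e : distinct4 a b c e -> distinct4 a c b e.
Proof. by move=> D; neq_of_distinct4 D; rewrite /distinct4; simpl_neq. Qed.

Lemma dreg_switchE d a b c e h :
  distinct4 a b c e -> switchable a b c e h ->
  is_dreg d (switch a b c e h) = is_dreg d h.
Proof.
move=> D P; apply/idP/idP; last exact: dreg_switch.
move=> Dt; rewrite -(switchK a b c e h) {1}switch_swap.
by apply: dreg_switch; [exact: distinct4_swap | rewrite switchable_switch |].
Qed.

Definition disjoint_switchings a b c e a' b' c' e' : Prop :=
  forall x y, switch_pair a b c e x y -> ~~ switch_pair a' b' c' e' x y.

Lemma disjoint_switchingsC a b c e a' b' c' e' :
  disjoint_switchings a b c e a' b' c' e' -> disjoint_switchings a' b' c' e' a b c e.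
Proof. by move=> dis x y; apply: contraL; exact: dis. Qed.

Lemma disjoint_switchingsP a b c e a' b' c' e' :
  ~~ switch_pair a' b' c' e' a b -> ~~ switch_pair a' b' c' e' c e ->
  ~~ switch_pair a' b' c' e' a c -> ~~ switch_pair a' b' c' e' b e ->
  disjoint_switchings a b c e a' b' c' e'.
Proof. by move=> ? ? ? ? x y /or4P[] /(switch_pair_same a' b' c' e') ->. Qed.

End Switching.

Section SwitchingIdentity.
Variables (R : realType) (N : nat).
Implicit Types (a b c e u v x y : 'I_N) (g h : graphN N).

Lemma adj_entry g x y : (adj g : 'M[R]_N) x y = (g (x, y))%:R.
Proof. by rewrite mxE. Qed.

Lemma chi_adj a b c e g : chi a b c e (adj g : 'M[R]_N) = (switchable a b c e g)%:R.
Proof.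
rewrite /chi !adj_entry /switchable.
by case: (g (a, b)); case: (g (c, e)); case: (g (a, c)); case: (g (b, e));
  rewrite /= ?subrr ?subr0 ?mulr0 ?mul0r ?mulr1.
Qed.

Lemma pair_indicator u v x y : u != v ->
  ((u == x) && (v == y))%:R + ((u == y) && (v == x))%:R = (same_pair x y u v)%:R :> R.
Proof.
move=> uv; rewrite /same_pair.
case ux: (u == x); case vy: (v == y); case uy: (u == y); case vx: (v == x);
  rewrite /= ?addr0 ?add0r //.
by move: uv; rewrite (eqP ux) (eqP vx) eqxx.
Qed.

Lemma xi_entry a b c e x y : distinct4 a b c e ->
  (xi a b c e : 'M[R]_N) x y = (same_pair x y a b)%:R + (same_pair x y c e)%:R
                               - (same_pair x y a c)%:R - (same_pair x y b e)%:R.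
Proof.
by case/and5P=> ab ac _ _ /andP[be ce]; rewrite /xi !mxE !pair_indicator.
Qed.


(* Entrywise core of [adj_switch]: toggling a bit that is forced to 1 by p1, p2
   and to 0 by p3, p4 (at most one of which holds) is undone by adding
   p1 + p2 - p3 - p4. *)
Lemma toggle_correction (t p1 p2 p3 p4 : bool) :
  (p1 || p2 -> t) -> (p3 || p4 -> ~~ t) ->
  ~~ [|| p1 && p2, p1 && p3, p1 && p4, p2 && p3, p2 && p4 | p3 && p4] ->
  (if [|| p1, p2, p3 | p4] then ~~ t else t)%:R + (p1%:R + p2%:R - p3%:R - p4%:R)
  = t%:R :> R.
Proof.
case: t; case: p1; case: p2; case: p3; case: p4 => //= forced_true forced_false _;
  rewrite ?(addr0, add0r, subr0, sub0r, subrr, addrN, addNr) //.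
all: by [move: (forced_true isT) | move: (forced_false isT)].
Qed.

Lemma adj_switch a b c e h :
  distinct4 a b c e -> switchable a b c e h -> symmetric_graph h ->
  (adj (switch a b c e h) : 'M[R]_N) + xi a b c e = adj h.
Proof.
move=> D /and4P[hab hce hac hbe] S; apply/matrixP=> x y.
rewrite mxE !adj_entry xi_entry // ffunE /=.
have excl u v u' v' : ~~ same_pair u v u' v' ->
    ~~ (same_pair x y u v && same_pair x y u' v').
  by move=> H; apply/negP=> /andP[U1 U2]; move: H; rewrite (same_pair_trans U1 U2).
apply: toggle_correction.
- by case/orP=> /(same_pair_edge S) ->.
- by case/orP=> /(same_pair_edge S) ->.
neq_of_distinct4 D.
by rewrite !negb_or !excl //; rewrite /same_pair; simpl_neq.
Qed.

(* The basic switching identity, by reindexing along [switch]. *)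
Theorem switching_identity d (H : 'M[R]_N -> R) a b c e : distinct4 a b c e ->
  \sum_(g | is_dreg d g) H (adj g) * chi a b c e (adj g)
  = \sum_(g | is_dreg d g) H (adj g + xi a b c e) * chi a c b e (adj g).
Proof.
move=> D; rewrite big_mkcond [RHS]big_mkcond.
rewrite [RHS](reindex_inj (inv_inj (switchK a b c e))) /=.
apply: eq_bigr => h _; rewrite !chi_adj switchable_switch //.
have [P|_] := boolP (switchable a b c e h); last by rewrite !mulr0; case: ifP; case: ifP.
by rewrite dreg_switchE //; case: ifP => // /symmetric_dreg S; rewrite adj_switch.
Qed.

End SwitchingIdentity.

Section DisjointSwitchings.
Variables (R : realType) (N : nat).
Implicit Types (a b c e x y : 'I_N).

Lemma xi_vanish a b c e x y : distinct4 a b c e -> ~~ switch_pair a b c e x y ->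
  (xi a b c e : 'M[R]_N) x y = 0.
Proof.
move=> D; rewrite xi_entry // /switch_pair.
by case/norP=> /negbTE -> /norP[/negbTE -> /norP[/negbTE -> /negbTE ->]]; rewrite !subr0 addr0.
Qed.

Lemma chi_shift (A B : 'M[R]_N) a b c e :
  (forall x y, switch_pair a b c e x y -> B x y = 0) ->
  chi a b c e (A + B) = chi a b c e A.
Proof.
have pair_in x y : same_pair x y x y by rewrite /same_pair !eqxx.
by move=> B0; rewrite /chi !mxE !B0 ?addr0 // /switch_pair pair_in ?orbT.
Qed.

Lemma sum_xi_vanish (I : eqType) (fa fb fc fe : I -> 'I_N) (s : seq I) x y :
  (forall t, t \in s -> distinct4 (fa t) (fb t) (fc t) (fe t)) ->
  (forall t, t \in s -> ~~ switch_pair (fa t) (fb t) (fc t) (fe t) x y) ->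
  (\sum_(t <- s) (xi (fa t) (fb t) (fc t) (fe t) : 'M[R]_N)) x y = 0.
Proof.
move=> D out; rewrite summxE big1_seq // => t /andP[_ ts].
exact: xi_vanish (D t ts) (out t ts).
Qed.

Lemma prod_chi_shift (I : eqType) (fa fb fc fe : I -> 'I_N) (s : seq I) (A B : 'M[R]_N) :
  (forall t, t \in s -> forall x y, switch_pair (fa t) (fb t) (fc t) (fe t) x y -> B x y = 0) ->
  \prod_(t <- s) chi (fa t) (fb t) (fc t) (fe t) (A + B)
  = \prod_(t <- s) chi (fa t) (fb t) (fc t) (fe t) A.
Proof. by move=> B0; apply: eq_big_seq => t ts; apply: chi_shift; exact: B0. Qed.

Theorem multi_switching_identity d (I : eqType) (fa fb fc fe : I -> 'I_N) (s : seq I) :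
  uniq s -> {in s, forall t, distinct4 (fa t) (fb t) (fc t) (fe t)} ->
  {in s &, forall t t', t != t' ->
     disjoint_switchings (fa t) (fb t) (fc t) (fe t) (fa t') (fb t') (fc t') (fe t')} ->
  forall H : 'M[R]_N -> R,
  \sum_(g | is_dreg d g) H (adj g) * \prod_(t <- s) chi (fa t) (fb t) (fc t) (fe t) (adj g)
  = \sum_(g | is_dreg d g) H (adj g + \sum_(t <- s) xi (fa t) (fb t) (fc t) (fe t))
       * \prod_(t <- s) chi (fa t) (fc t) (fb t) (fe t) (adj g).
Proof.
elim: s => [|q s IH] /= Us D dis H; first by apply: eq_bigr => g _; rewrite !big_nil addr0.
case/andP: Us => qs Us.
have Dq := D q (mem_head q s).
have Ds t : t \in s -> distinct4 (fa t) (fb t) (fc t) (fe t).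
  by move=> ts; apply: D; rewrite in_cons ts orbT.
have dis_q t : t \in s -> disjoint_switchings (fa q) (fb q) (fc q) (fe q) (fa t) (fb t) (fc t) (fe t).
  move=> ts; apply: dis; rewrite ?mem_head ?in_cons ?ts ?orbT //.
  by apply: contraNneq qs => ->.
pose xq : 'M[R]_N := xi (fa q) (fb q) (fc q) (fe q).
pose X : 'M[R]_N := \sum_(t <- s) xi (fa t) (fb t) (fc t) (fe t).
have xq_out t : t \in s -> forall x y, switch_pair (fa t) (fb t) (fc t) (fe t) x y ->
    xq x y = 0.
  by move=> ts x y tp; apply: xi_vanish => //; apply: disjoint_switchingsC (dis_q t ts) x y tp.
have X_out x y : switch_pair (fa q) (fc q) (fb q) (fe q) x y -> X x y = 0.
  by rewrite -switch_pair_swap => qp; apply: sum_xi_vanish Ds _ => t ts; apply: dis_q.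
have dis_s : {in s &, forall t t', t != t' ->
     disjoint_switchings (fa t) (fb t) (fc t) (fe t) (fa t') (fb t') (fc t') (fe t')}.
  by move=> t t' ts t's; apply: dis; rewrite in_cons ?ts ?t's orbT.
transitivity (\sum_(g | is_dreg d g) (H (adj g) *
    \prod_(t <- s) chi (fa t) (fb t) (fc t) (fe t) (adj g)) * chi (fa q) (fb q) (fc q) (fe q) (adj g)).
  by apply: eq_bigr => g _; rewrite big_cons [chi _ _ _ _ _ * _]mulrC mulrA.
rewrite (switching_identity _ (fun B => H B * \prod_(t <- s) chi (fa t) (fb t) (fc t) (fe t) B) Dq).
transitivity (\sum_(g | is_dreg d g) (H (adj g + xq) * chi (fa q) (fc q) (fb q) (fe q) (adj g))
    * \prod_(t <- s) chi (fa t) (fb t) (fc t) (fe t) (adj g)).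
  by apply: eq_bigr => g _; rewrite prod_chi_shift // mulrAC.
rewrite (IH Us Ds dis_s (fun B => H (B + xq) * chi (fa q) (fc q) (fb q) (fe q) B)) -/X.
apply: eq_bigr => g _; rewrite big_cons big_cons mulrA chi_shift //.
by rewrite -addrA [X + _]addrC.
Qed.

End DisjointSwitchings.

Section InOutSwitchings.
Variables (N : nat) (V : {set 'I_N}).
Implicit Types (a b c e x y : 'I_N).

Lemma neq_in_out x y : x \in V -> y \notin V -> (x == y) = false.
Proof. by move=> xV yV; apply/negbTE; apply: contraNneq yV => <-. Qed.

Lemma switch_pair_inside a b c e x y : b \notin V -> c \notin V -> e \notin V ->
  x \in V -> y \in V -> ~~ switch_pair a b c e x y.
Proof.
move=> bV cV eV xV yV.
have := neq_in_out xV bV; have := neq_in_out yV bV; have := neq_in_out xV cV;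
have := neq_in_out yV cV; have := neq_in_out xV eV; have := neq_in_out yV eV.
by do 6 move=> ?; rewrite /switch_pair /same_pair; simpl_neq.
Qed.

Lemma in_out_switchings_disjoint i i' j j' k k' l l' :
  i \in V -> i' \in V -> k \in V -> k' \in V ->
  j \notin V -> j' \notin V -> l \notin V -> l' \notin V ->
  l != j -> l != j' -> l' != j -> l' != j' -> ~~ same_pair i i' k k' ->
  disjoint_switchings i i' j j' k k' l l'.
Proof.
move=> iV i'V kV k'V jV j'V lV l'V /negbTE lj /negbTE lj' /negbTE l'j /negbTE l'j' /negbTE ik.
have := neq_in_out kV jV; have := neq_in_out kV j'V; have := neq_in_out k'V jV;
have := neq_in_out k'V j'V; have := neq_in_out iV lV; have := neq_in_out i'V lV;
have := neq_in_out iV l'V; have := neq_in_out i'V l'V.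
by do 8 move=> ?; apply: disjoint_switchingsP; rewrite /switch_pair ?ik /same_pair; simpl_neq.
Qed.

End InOutSwitchings.

Lemma uniq_image_inj (T U : finType) (f : T -> U) :
  uniq [seq f x | x : T] -> injective f.
Proof. by move/card_uniqP; rewrite size_image => /eqP/image_injP inj x y; apply: inj. Qed.

Lemma uniq_labels (T U : finType) (V : {set U}) (f g : T -> U) :
  uniq (enum V ++ [seq f x | x : T] ++ [seq g x | x : T]) ->
  [/\ forall x, f x \notin V, forall x, g x \notin V, injective f, injective g
    & forall x y, f x != g y].
Proof.
rewrite !cat_uniq has_cat negb_or => /and3P[_ /andP[fV gV] /and3P[/uniq_image_inj f_inj fg
  /uniq_image_inj g_inj]].
split=> // [x | x | x y].
- by apply: contra fV => fxV; apply/hasP; exists (f x); rewrite ?image_f ?mem_enum.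
- by apply: contra gV => gxV; apply/hasP; exists (g x); rewrite ?image_f ?mem_enum.
- by apply: contra fg => /eqP fxy; apply/hasP; exists (g y); rewrite ?image_f // -fxy image_f.
Qed.

(* Second part of the proposition: a switching with three vertices outside V
   leaves the forest weight A_T untouched. *)
Lemma edge_weighted_switching (R : realType) (N d m : nat) (V : {set 'I_N})
    (ie ie' : 'I_m -> 'I_N) (F : 'M[R]_N -> R) (a b c e : 'I_N) :
  (forall t, ie t \in V /\ ie' t \in V) -> distinct4 a b c e ->
  b \notin V -> c \notin V -> e \notin V ->
  Exp d (fun A => A_T ie ie' A * chi a b c e A * F A)
  = Exp d (fun A => A_T ie ie' A * chi a c b e A * F (A + xi a b c e)).
Proof.
move=> inV D bV cV eV; rewrite /Exp; congr (_ / _).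
transitivity (\sum_(g | is_dreg d g) (A_T ie ie' (adj g) * F (adj g)) * chi a b c e (adj g)).
  by apply: eq_bigr => g _; rewrite mulrAC.
rewrite (switching_identity _ (fun B => A_T ie ie' B * F B) D).
apply: eq_bigr => g _; rewrite mulrAC; congr (_ * _ * _).
apply: eq_bigr => t _; have [? ?] := inV t.
by rewrite mxE xi_vanish ?addr0 // (switch_pair_inside (V := V)).
Qed.

(* First part of the proposition: one switching per edge of the forest. *)
Lemma edge_switching (R : realType) (N d m : nat) (V : {set 'I_N})
    (ie ie' je je' : 'I_m -> 'I_N) (F : 'M[R]_N -> R) :
  (forall t, [/\ ie t \in V, ie' t \in V & ie t != ie' t]) ->
  (forall t t', t != t' -> ~~ same_pair (ie t) (ie' t) (ie t') (ie' t')) ->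
  uniq (enum V ++ [seq je t | t : 'I_m] ++ [seq je' t | t : 'I_m]) ->
  Exp d (fun A => F A * \prod_(t < m) chi (ie t) (ie' t) (je t) (je' t) A)
  = Exp d (fun A => F (A + \sum_(t < m) xi (ie t) (ie' t) (je t) (je' t))
                    * \prod_(t < m) chi (ie t) (je t) (ie' t) (je' t) A).
Proof.
move=> edges distinct_edges /uniq_labels[jV j'V j_inj j'_inj jj'].
rewrite /Exp; congr (_ / _); apply: multi_switching_identity; first exact: index_enum_uniq.
  move=> t _; have [iV i'V ii'] := edges t.
  by rewrite /distinct4 ii' (neq_in_out iV (jV t)) (neq_in_out iV (j'V t))
    (neq_in_out i'V (jV t)) (neq_in_out i'V (j'V t)) jj'.
move=> t t' _ _ tt'; have [iV i'V _] := edges t; have [kV k'V _] := edges t'.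
apply: (in_out_switchings_disjoint iV i'V kV k'V) => //; rewrite ?jj' 1?eq_sym ?jj' //.
- by apply: contraNneq tt' => /j_inj ->.
- by apply: contraNneq tt' => /j'_inj ->.
- exact: distinct_edges.
Qed.

Theorem proposition3p1 (R : realType) (N d m : nat) (V : {set 'I_N})
    (ie ie' : 'I_m -> 'I_N) :
  is_forest V ie ie' ->
  (forall (F : 'M[R]_N -> R) (je je' : 'I_m -> 'I_N),
     uniq (enum V ++ [seq je e | e : 'I_m] ++ [seq je' e | e : 'I_m]) ->
     Exp d (fun A => F A * \prod_(e < m) chi (ie e) (ie' e) (je e) (je' e) A)
     = Exp d (fun A => F (A + \sum_(e < m) xi (ie e) (ie' e) (je e) (je' e))
                       * \prod_(e < m) chi (ie e) (je e) (ie' e) (je' e) A)) /\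
  (forall (F : 'M[R]_N -> R) (i j k mm l : 'I_N),
     i \in V -> uniq (enum V ++ [:: j; k; mm; l]) ->
     Exp d (fun A => A_T ie ie' A * chi i k mm l A * F A)
     = Exp d (fun A => A_T ie ie' A * chi i mm k l A * F (A + xi i k mm l)) /\
     Exp d (fun A => A_T ie ie' A * chi j k mm l A * F A)
     = Exp d (fun A => A_T ie ie' A * chi j mm k l A * F (A + xi j k mm l))).
Proof.
move=> [edges [distinct_edges _]].
have inV t : ie t \in V /\ ie' t \in V by have [] := edges t.
split=> [F je je' | F i j k mm l iV].
  apply: edge_switching => // t t' tt'; apply/negP; apply: distinct_edges.
  by rewrite eq_sym.
rewrite cat_uniq => /and3P[_ outside distinct].
move: outside distinct; rewrite /= !mem_enum orbF !inE !negb_or andbT.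
move=> /and4P[jV kV mV lV] /and3P[/and3P[jk jm jl] /andP[km kl] ml].
split; apply: edge_weighted_switching => //.
  by rewrite /distinct4 !(neq_in_out iV) // km kl ml.
by rewrite /distinct4 jk jm jl km kl ml.
Qed.
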